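(* Let $X,Y$ be Banach spaces over $\mathbb{K}\in\{\mathbb{R},\mathbb{C}\}$ and let $G\in L(X,Y)$ with $\|G\|=1$. If $n_G^{(2)}(X,Y)=1$, then $n_G^{(1)}(X,Y)= n_G(X,Y)$.
   Context: For $T\in L(X,Y)$: $\|T\|_G := \inf_{\delta>0}\sup\{\|Tx\|: x\in S_X,\ \|Gx\|>1-\delta\}$ ($S_X$ the unit sphere); $V_G(T):=\bigcap_{\delta>0}\overline{\{y^*(Tx): x\in S_X,\ y^*\in S_{Y^*},\ \operatorname{Re} y^*(Gx)>1-\delta\}}$, $\nu_G(T):=\max\{|\lambda|:\lambda\in V_G(T)\}$. The numerical indices are $n_G(X,Y):=\inf\{\nu_G(T):\|T\|=1\}=\max\{k\ge0: k\|T\|\le\nu_G(T)\ \forall T\}$, $n_G^{(1)}(X,Y):=\inf\{\|T\|_G:\|T\|=1\}=\max\{k\ge0: k\|T\|\le\|T\|_G\ \forall T\}$, $n_G^{(2)}(X,Y):=\inf\{\nu_G(T):\|T\|_G=1\}=\max\{k\ge0: k\|T\|_G\le\nu_G(T)\ \forall T\}$, all over $T\in L(X,Y)$. Standing assumption of the paper: $\|\cdot\|_G$ is a norm on $L(X,Y)$. *)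

From HB Require Import structures.
From mathcomp Require Import all_boot all_order all_algebra.
From mathcomp Require Import all_classical all_reals all_analysis.
From mathcomp Require Import complex.
Set Implicit Arguments. Unset Strict Implicit. Unset Printing Implicit Defensive.
Import Order.TTheory GRing.Theory Num.Theory.
Import numFieldNormedType.Exports.
Local Open Scope classical_set_scope.
Local Open Scope ring_scope.

(* Generic setting: scalar field K (K = R or K = R[i]), with a real part map
   re : K -> R (re = id in the real case, complex.Re in the complex case).
   All norms are real numbers in R obtained as  re `|.|  (the norm of a
   numFieldType / normedModType K is K-valued but real). *)
Section GNumIndex.
Variables (R : realType) (K : numFieldType) (re : K -> R).

Definition rnorm (V : normedModType K) (v : V) : R := re `|v|.
Definition rabs (z : K) : R := re `|z|.

Variables (X Y : normedModType K).

Definition opnorm (T : X -> Y) : R :=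
  sup [set rnorm (T x) | x in [set x : X | rnorm x <= 1]].

Definition fnorm (f : Y -> K) : R :=
  sup [set rabs (f y) | y in [set y : Y | rnorm y <= 1]].

Definition bdd_lin (T : {linear X -> Y}) : Prop := continuous T.

Definition dual_sphere (f : {linear Y -> K^o}) : Prop :=
  continuous (f : Y -> K) /\ fnorm f = 1.

Definition sphereX : set X := [set x | rnorm x = 1].

Definition Gnorm (G T : X -> Y) : R :=
  inf [set sup [set rnorm (T x) | x in [set x | sphereX x /\ 1 - d < rnorm (G x)]]
      | d in [set d : R | 0 < d]].

Definition VG (G T : X -> Y) : set K :=
  \bigcap_(d in [set d : R | 0 < d])
    closure [set z : K | exists (x : X) (f : {linear Y -> K^o}),
               [/\ sphereX x, dual_sphere f, 1 - d < re (f (G x)) & z = f (T x)]].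

(* nu_G(T) := max { |lambda| : lambda in V_G(T) }  (the max is attained; we use sup) *)
Definition nuG (G T : X -> Y) : R := sup [set rabs l | l in VG G T].

Definition nG (G : X -> Y) : R :=
  inf [set nuG G T | T in [set T : {linear X -> Y} | bdd_lin T /\ opnorm T = 1]].

Definition nG1 (G : X -> Y) : R :=
  inf [set Gnorm G T | T in [set T : {linear X -> Y} | bdd_lin T /\ opnorm T = 1]].

Definition nG2 (G : X -> Y) : R :=
  inf [set nuG G T | T in [set T : {linear X -> Y} | bdd_lin T /\ Gnorm G T = 1]].

(* Standing assumption of the paper: ||.||_G is a norm on L(X,Y). *)
Definition Gnorm_is_norm (G : X -> Y) : Prop :=
  [/\ (forall S T : {linear X -> Y}, bdd_lin S -> bdd_lin T ->
         Gnorm G (fun x => S x + T x) <= Gnorm G S + Gnorm G T),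
      (forall (a : K) (T : {linear X -> Y}), bdd_lin T ->
         Gnorm G (fun x => a *: T x) = rabs a * Gnorm G T) &
      (forall T : {linear X -> Y}, bdd_lin T -> Gnorm G T = 0 -> forall x, T x = 0)].

End GNumIndex.

From HB Require Import structures.
From mathcomp Require Import all_boot all_order all_algebra.
From mathcomp Require Import all_classical all_reals all_analysis.
From mathcomp Require Import complex.
Set Implicit Arguments. Unset Strict Implicit. Unset Printing Implicit Defensive.
Import Order.TTheory GRing.Theory Num.Theory.
Import numFieldNormedType.Exports.
Local Open Scope classical_set_scope.
Local Open Scope ring_scope.

(* Always nu_G(T) <= ||T||_G, since every element of V_G(T) is a limit of
   values y*(Tx) with ||y*|| = 1 and x in the slices defining ||T||_G.
   Conversely, ||.||_G and nu_G are both absolutely homogeneous, so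
   n_G^(2) = 1 rescales to ||T||_G <= nu_G(T) for every T.  Hence
   nu_G = ||.||_G on L(X,Y), and the infima defining n_G and n_G^(1) are
   taken over the same set of numbers. *)

Lemma sup_ge0 (R : realType) (E : set R) : (forall x, E x -> 0 <= x) -> 0 <= sup E.
Proof.
move=> E0; have [[[e Ee] ubE]|noSup] := pselect (has_sup E); last by rewrite sup_out.
exact: le_trans (E0 _ Ee) (ub_le_sup ubE Ee).
Qed.

Lemma closure_norm_le (K : numFieldType) (A : set K) (k l : K) : 0 <= k ->
  (forall z, A z -> `|z| <= k) -> closure A l -> `|l| <= k.
Proof.
move=> k0 Ak clAl; rewrite real_leNgt ?ger0_real //; apply/negP => kl.
have e0 : 0 < `|l| - k by rewrite subr_gt0.
have [z [Az]] := clAl _ (nbhsx_ballx l _ e0).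
rewrite -ball_normE /ball_ /= => lz.
suff : `|l| < `|l| by rewrite ltxx.
rewrite -{1}(subrK z l) -[X in _ < X](subrK k).
exact: le_lt_trans (ler_normD _ _) (ltr_leD lz (Ak _ Az)).
Qed.

Lemma continuous_linear_bounded (K : numFieldType) (V W : normedModType K)
    (T : {linear V -> W}) : continuous T ->
  exists2 M : K, 0 <= M & forall x, `|x| <= 1 -> `|T x| <= M.
Proof.
move=> /linear_bounded_continuous /bounded_funP /(_ 1) [M TM].
by exists M => //; apply: le_trans (TM 0 _); rewrite ?linear0 ?normr0.
Qed.

(* [re] is the real part of the scalar field ([id] on [R], [complex.Re] on
   [R[i]]); all that is used is that it maps the nonnegative scalars
   isomorphically onto the nonnegative reals and that [re z <= re `|z|]. *)
Section RealPartNumericalIndex.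
Variables (R : realType) (K : numFieldType) (re : K -> R).
Hypothesis re_le_nneg : forall k l : K, 0 <= k -> 0 <= l -> (re k <= re l) = (k <= l).
Hypothesis re_mul_nneg : forall k l : K, 0 <= k -> 0 <= l -> re (k * l) = re k * re l.
Hypothesis re1 : re 1 = 1.
Hypothesis re0 : re 0 = 0.
Hypothesis re_onto_nneg : forall r : R, 0 <= r -> exists2 k : K, 0 <= k & re k = r.
Hypothesis re_le_re_norm : forall z : K, re z <= re `|z|.

Lemma re_ge0 (k : K) : 0 <= k -> 0 <= re k.
Proof. by move=> k0; rewrite -re0 re_le_nneg. Qed.

Lemma rnorm_ge0 (V : normedModType K) (v : V) : 0 <= rnorm re v.
Proof. exact: re_ge0. Qed.

Lemma rabs_ge0 (z : K) : 0 <= rabs re z.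
Proof. exact: re_ge0. Qed.

Lemma rabsM (a b : K) : rabs re (a * b) = rabs re a * rabs re b.
Proof. by rewrite /rabs normrM re_mul_nneg. Qed.

Lemma rnorm_le1 (V : normedModType K) (v : V) : rnorm re v <= 1 -> `|v| <= 1.
Proof. by rewrite /rnorm -re1 re_le_nneg. Qed.

Lemma rnorm_eq1 (V : normedModType K) (v : V) : rnorm re v = 1 -> `|v| = 1.
Proof.
rewrite /rnorm -re1 => v1; apply/eqP; rewrite eq_le.
by rewrite -[_ <= 1]re_le_nneg // -[1 <= _]re_le_nneg // v1 lexx.
Qed.

Variables (X Y : normedModType K).

Lemma dual_sphere_le_norm (f : {linear Y -> K^o}) : dual_sphere re f ->
  forall y, `|f y| <= `|y|.
Proof.
move=> [cf f1] y.
have [M M0 fM] := continuous_linear_bounded cf.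
have f_ball : forall z, rnorm re z <= 1 -> `|f z| <= 1.
  move=> z z1; rewrite -(re_le_nneg (normr_ge0 _) ler01) re1 -f1.
  apply: ub_le_sup; last by exists z.
  by exists (re M) => _ [u /rnorm_le1 u1 <-]; rewrite /rabs re_le_nneg // fM.
have [->|y0] := eqVneq y 0; first by rewrite linear0 !normr0.
have ny0 : 0 < `|y| by rewrite normr_gt0.
have : `|f (`|y|^-1 *: y)| <= 1.
  by apply: f_ball; rewrite /rnorm normrZ normfV normr_id mulVf ?gt_eqF ?re1.
by rewrite linearZ /= normrM normfV normr_id ler_pdivrMl // mulr1.
Qed.

Definition Gslice_sup (G T : X -> Y) (d : R) : R :=
  sup [set rnorm re (T x) | x in [set x | sphereX re x /\ 1 - d < rnorm re (G x)]].

Lemma Gnorm_ge0 (G T : X -> Y) : 0 <= Gnorm re G T.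
Proof.
apply: lb_le_inf; first by exists (Gslice_sup G T 1), 1; rewrite /= ?ltr01.
by move=> _ [d _ <-]; apply: sup_ge0 => _ [x _ <-]; exact: rnorm_ge0.
Qed.

Lemma nuG_ge0 (G T : X -> Y) : 0 <= nuG re G T.
Proof. by apply: sup_ge0 => _ [l _ <-]; exact: rabs_ge0. Qed.

Lemma VG_le_Gslice_sup (G : X -> Y) (T : {linear X -> Y}) : continuous T ->
  forall l d, VG re G T l -> 0 < d -> rabs re l <= Gslice_sup G T d.
Proof.
move=> cT l d VGl d0; rewrite /Gslice_sup.
set B := [set rnorm re (T x) | x in _].
have [M M0 TM] := continuous_linear_bounded cT.
have ubB : has_ubound B.
  by exists (re M) => _ [x [/rnorm_eq1 x1 _] <-]; rewrite /rnorm re_le_nneg // TM ?x1.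
have supB_ge0 : 0 <= sup B by apply: sup_ge0 => _ [x _ <-]; exact: rnorm_ge0.
have [k k0 re_k] := re_onto_nneg supB_ge0.
rewrite -re_k /rabs re_le_nneg //.
apply: (closure_norm_le k0 _ (VGl d d0)) => _ [x [f [Sx fS Gx ->]]].
have fle := dual_sphere_le_norm fS.
have Bx : B (rnorm re (T x)).
  exists x => //; split => //; apply: lt_le_trans Gx _.
  by apply: le_trans (re_le_re_norm _) _; rewrite re_le_nneg.
rewrite -(re_le_nneg (normr_ge0 _) k0) re_k.
by apply: le_trans (ub_le_sup ubB Bx); rewrite /rnorm re_le_nneg.
Qed.

Lemma VG_le_Gnorm (G : X -> Y) (T : {linear X -> Y}) : continuous T ->
  forall l, VG re G T l -> rabs re l <= Gnorm re G T.
Proof.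
move=> cT l VGl; apply: lb_le_inf; first by exists (Gslice_sup G T 1), 1; rewrite /= ?ltr01.
by move=> _ [d d0 <-]; exact: VG_le_Gslice_sup.
Qed.

Lemma nuG_le_Gnorm (G : X -> Y) (T : {linear X -> Y}) : continuous T ->
  nuG re G T <= Gnorm re G T.
Proof.
move=> cT; have [VG0|VGn0] := eqVneq [set rabs re l | l in VG re G T] set0.
  by rewrite /nuG VG0 sup0 Gnorm_ge0.
apply: ge_sup; first exact/set0P.
by move=> _ [l VGl <-]; exact: VG_le_Gnorm.
Qed.

Lemma VGZ (G : X -> Y) (T : {linear X -> Y}) (a : K) l : a != 0 ->
  VG re G (a \*: T) l -> VG re G T (a^-1 * l).
Proof.
move=> a0 VGl d d0 B /(@mulrl_continuous K a^-1 l) /(VGl d d0) [_ [[x [f [Sx fS Gx ->]]]]].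
by rewrite /= linearZ /= mulKf // => Bz; exists (f (T x)); split => //; exists x, f.
Qed.

Lemma nuGZ_le (G : X -> Y) (T : {linear X -> Y}) (a : K) : continuous T ->
  a != 0 -> nuG re G (a \*: T) <= rabs re a * nuG re G T.
Proof.
move=> cT a0; have [VG0|VGn0] := eqVneq [set rabs re l | l in VG re G (a \*: T)] set0.
  by rewrite /nuG VG0 sup0 mulr_ge0 ?rabs_ge0 ?nuG_ge0.
apply: ge_sup; first exact/set0P.
move=> _ [l VGl <-]; rewrite -[l](mulVKf a0) rabsM ler_wpM2l ?rabs_ge0 //.
apply: ub_le_sup; last by exists (a^-1 * l); first exact: VGZ.
by exists (Gnorm re G T) => _ [z VGz <-]; exact: VG_le_Gnorm.
Qed.

Lemma nG2_le_nuG (G T : {linear X -> Y}) : continuous T -> Gnorm re G T = 1 ->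
  nG2 re G <= nuG re G T.
Proof.
move=> cT GT1; apply: ge_inf; last by exists T.
by exists 0 => _ [S _ <-]; exact: nuG_ge0.
Qed.

Lemma nuG_eq_Gnorm (G T : {linear X -> Y}) : Gnorm_is_norm re G -> nG2 re G = 1 ->
  continuous T -> nuG re G T = Gnorm re G T.
Proof.
move=> [_ GnormZ _] nG2_1 cT; apply/eqP; rewrite eq_le nuG_le_Gnorm //=.
have [->|GT0] := eqVneq (Gnorm re G T) 0; first exact: nuG_ge0.
have GT_gt0 : 0 < Gnorm re G T by rewrite lt_neqAle eq_sym GT0 Gnorm_ge0.
have GTV_ge0 : 0 <= (Gnorm re G T)^-1 by rewrite invr_ge0 Gnorm_ge0.
have [a a0 re_a] := re_onto_nneg GTV_ge0.
have rabs_a : rabs re a = (Gnorm re G T)^-1 by rewrite /rabs ger0_norm.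
have a_neq0 : a != 0.
  by apply: contraPneq re_a => ->; rewrite re0 => /esym/eqP; rewrite invr_eq0 (negPf GT0).
have caT : continuous (a \*: T) := fun x => continuousZl_tmp (k := a) (cT x).
have GaT1 : Gnorm re G (a \*: T) = 1 by rewrite GnormZ // rabs_a mulVf.
have := le_trans (nG2_le_nuG caT GaT1) (nuGZ_le G cT a_neq0).
by rewrite nG2_1 rabs_a mulrC ler_pdivlMr // mul1r.
Qed.

Lemma nG1_eq_nG (G : {linear X -> Y}) : Gnorm_is_norm re G -> nG2 re G = 1 ->
  nG1 re G = nG re G.
Proof.
move=> GnormN nG2_1; congr inf; apply: eq_imagel => T [cT _].
by rewrite nuG_eq_Gnorm.
Qed.

End RealPartNumericalIndex.

Lemma Re_le_nneg (R : realType) (k l : R[i]) : 0 <= k -> 0 <= l ->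
  (complex.Re k <= complex.Re l) = (k <= l).
Proof. by move=> k0 l0; rewrite lecE (ger0_Im k0) (ger0_Im l0) eqxx. Qed.

Lemma Re_mul_nneg (R : realType) (k l : R[i]) : 0 <= k -> 0 <= l ->
  complex.Re (k * l) = complex.Re k * complex.Re l.
Proof.
by case: k l => [a b] [c d] /ger0_Im /= -> /ger0_Im /= ->; rewrite mulr0 subr0.
Qed.

Lemma Re_le_Re_normc (R : realType) (z : R[i]) : complex.Re z <= complex.Re `|z|.
Proof.
case: z => a b; rewrite normc_def /=; apply: le_trans (ler_norm a) _.
by rewrite -sqrtr_sqr ler_sqrt ?lerDl ?sqr_ge0 // addr_ge0 ?sqr_ge0.
Qed.

Theorem proposition3p5 (R : realType) :
  (forall (X Y : completeNormedModType R) (G : {linear X -> Y}),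
     continuous G -> opnorm (fun r : R => r) G = 1 ->
     Gnorm_is_norm (fun r : R => r) G ->
     nG2 (fun r : R => r) G = 1 ->
     nG1 (fun r : R => r) G = nG (fun r : R => r) G)
  /\
  (forall (X Y : completeNormedModType R[i]) (G : {linear X -> Y}),
     continuous G -> opnorm (@complex.Re R) G = 1 ->
     Gnorm_is_norm (@complex.Re R) G ->
     nG2 (@complex.Re R) G = 1 ->
     nG1 (@complex.Re R) G = nG (@complex.Re R) G).
Proof.
split => X Y G _ _; apply: nG1_eq_nG => //.
- by move=> r r0; exists r.
- exact: ler_norm.
- exact: Re_le_nneg.
- exact: Re_mul_nneg.
- by move=> r r0; exists r%:C%C; rewrite ?ler0c.
- exact: Re_le_Re_normc.
Qed.
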